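(* We have $h_s(2) = 6$ and $h_s(3) = 12$.
   Context: A real matrix is called totally $1$-submodular if every square submatrix (of every size) has determinant of absolute value at most $1$. For $t \in \mathbb{R}^m$ and $A\in\mathbb{R}^{m\times n}$ with columns $A_1,\dots,A_n$, $t+A$ denotes the matrix with columns $t+A_1,\dots,t+A_n$. The shifted Heller constant $h_s(m)$ is the maximum $n$ such that there exist a vector $t \in [0,1)^m\setminus\{\mathbf 0\}$ and a matrix $A \in \{-1,0,1\}^{m\times n}$ with pairwise distinct columns such that $t+A$ is totally $1$-submodular. *)

From HB Require Import structures.
From mathcomp Require Import all_boot all_order all_algebra.
From mathcomp Require Import reals.
Set Implicit Arguments. Unset Strict Implicit. Unset Printing Implicit Defensive.
Import Order.TTheory GRing.Theory Num.Theory.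
Local Open Scope ring_scope.

Definition totally_1_submodular (R : numDomainType) (m n : nat)
    (M : 'M[R]_(m, n)) : Prop :=
  forall (k : nat) (f : 'I_k -> 'I_m) (g : 'I_k -> 'I_n),
    injective f -> injective g ->
    `|\det (\matrix_(i < k, j < k) M (f i) (g j))| <= 1.

Definition shift_mx (R : numDomainType) (m n : nat)
    (t : 'cV[R]_m) (A : 'M[int]_(m, n)) : 'M[R]_(m, n) :=
  \matrix_(i < m, j < n) (t i ord0 + (A i j)%:~R).

Definition shifted_heller_feasible (R : realType) (m n : nat) : Prop :=
  exists (t : 'cV[R]_m) (A : 'M[int]_(m, n)),
    [/\ forall i, 0 <= t i ord0 < 1,
        t != 0,
        forall i j, A i j \in [:: -1; 0; 1],
        injective (fun j => col j A)
      & totally_1_submodular (shift_mx t A)].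

Definition shifted_heller_constant_is (R : realType) (m N : nat) : Prop :=
  shifted_heller_feasible R m N /\
  forall n : nat, shifted_heller_feasible R m n -> (n <= N)%N.

From HB Require Import structures.
From mathcomp Require Import all_boot all_order all_algebra.
From mathcomp Require Import reals.
From mathcomp Require Import perm ring lra zify.
Set Implicit Arguments. Unset Strict Implicit. Unset Printing Implicit Defensive.
Import Order.TTheory GRing.Theory Num.Theory.
Local Open Scope ring_scope.

(* An entry t_i + 1 > 1 is excluded, so a row with t_i > 0 has
   entries in {-1, 0}; with p such rows the distinct columns number at most
   2^p 3^(m-p).  As t <> 0 forces p >= 1, this gives h_s(2) <= 6, and
   h_s(3) <= 12 unless exactly one row is shifted.  In that case the 18
   candidate columns split into six triples, and no triple can occur entirely
   because some minor of its three columns has absolute value > 1 for every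
   shift in (0, 1).
   Lower bounds.  t = (1/2, 0), resp. (1/2, 1/2, 0), together with all the
   candidate columns: all minors of 2 (t + A) are integers and are checked by
   computation. *)

Section Minors.
Variables (R : comNzRingType) (I J : Type) (F : I -> J -> R).

Definition minor2 i1 i2 j1 j2 : R := F i1 j1 * F i2 j2 - F i1 j2 * F i2 j1.

Definition minor3 i1 i2 i3 j1 j2 j3 : R :=
  F i1 j1 * minor2 i2 i3 j2 j3 - F i1 j2 * minor2 i2 i3 j1 j3
  + F i1 j3 * minor2 i2 i3 j1 j2.

Lemma det_submx22 (f : 'I_2 -> I) (g : 'I_2 -> J) :
  \det (\matrix_(a, b) F (f a) (g b)) = minor2 (f 0) (f 1) (g 0) (g 1).
Proof.
rewrite (expand_det_row _ 0) !big_ord_recr big_ord0 /= /cofactor !det_mx11 !mxE /=.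
rewrite /minor2 add0r expr0 expr1 !mul1r mulN1r mulrN.
by congr (F (f _) (g _) * F (f _) (g _) - F (f _) (g _) * F (f _) (g _)); apply/val_inj.
Qed.

Lemma det_submx33 (f : 'I_3 -> I) (g : 'I_3 -> J) :
  \det (\matrix_(a, b) F (f a) (g b)) = minor3 (f 0) (f 1) (f 2) (g 0) (g 1) (g 2).
Proof.
(* Reindexing by [val] turns the closed ordinal terms produced by the
   Laplace expansion into numerals. *)
pose F' x y := F (f (inord x)) (g (inord y)).
have Fv x y : F (f x) (g y) = F' x y by rewrite /F' !inord_val.
rewrite (expand_det_row _ 0) !big_ord_recr big_ord0 /= /cofactor.
rewrite !(expand_det_row _ 0) !big_ord_recr !big_ord0 /= /cofactor !det_mx11 !mxE /=.
rewrite /minor3 /minor2 !Fv /=.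
rewrite -[(1 %% 3)%N]/1%N -[((1 %% 3 + 1 %% 3) %% 3)%N]/2%N -[bump 1 0]/0%N -[bump 2 0]/0%N.
rewrite -[bump 0 0]/1%N -[bump 2 1]/1%N -[bump 0 1]/2%N -[bump 1 1]/2%N.
ring.
Qed.

End Minors.

Section Submatrices.
Variables (R : numDomainType) (m n : nat) (M : 'M[R]_(m, n)).
Hypothesis M1 : totally_1_submodular M.

Lemma totally_1_submodular_submx k (f : 'I_k -> 'I_m) (g : 'I_k -> 'I_n) :
  injective f -> injective g -> totally_1_submodular (\matrix_(a, b) M (f a) (g b)).
Proof.
move=> f_inj g_inj l f' g' f'_inj g'_inj.
rewrite (_ : \matrix_(a, b) _ = \matrix_(a, b) M (f (f' a)) (g (g' b))).
  exact: M1 (inj_comp f_inj f'_inj) (inj_comp g_inj g'_inj).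
by apply/matrixP => a b; rewrite !mxE.
Qed.

Lemma totally_1_submodular_entry i j : `|M i j| <= 1.
Proof.
have ord1_inj (T : Type) (x : T) : injective (fun _ : 'I_1 => x).
  by move=> a b _; rewrite (ord1 a) (ord1 b).
by have := M1 (ord1_inj _ i) (ord1_inj _ j); rewrite det_mx11 mxE.
Qed.

End Submatrices.

Lemma det_intr_submx_div (R : fieldType) k (I J : Type) (B : I -> J -> int) (d : R)
    (f : 'I_k -> I) (g : 'I_k -> J) :
  \det (\matrix_(a, b) ((B (f a) (g b))%:~R / d))
  = (\det (\matrix_(a, b) B (f a) (g b)))%:~R / d ^+ k.
Proof.
have -> : \matrix_(a, b) ((B (f a) (g b))%:~R / d)
          = d^-1 *: map_mx intr (\matrix_(a, b) B (f a) (g b)).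
  by apply/matrixP => a b; rewrite !mxE mulrC.
by rewrite detZ det_map_mx exprVn mulrC.
Qed.

Lemma norm_intr_div_le1 (R : numFieldType) (x : int) (c : nat) :
  (0 < c)%N -> `|x| <= c%:Z -> `|x%:~R / c%:R : R| <= 1.
Proof.
move=> c_gt0 x_le; rewrite normrM normfV normr_nat ler_pdivrMr ?ltr0n // mul1r.
by rewrite -intr_norm -[c%:R]/((c%:Z)%:~R : R) ler_int.
Qed.

(* Unlike [[forall i : 'I_n, P i]], this reduces by computation: [card] and
   [enum] are locked. *)
Definition forall_lt (n : nat) (P : pred nat) : bool := all P (iota 0 n).

Lemma forall_ltP n (P : pred nat) : reflect (forall i : 'I_n, P i) (forall_lt n P).
Proof.
apply: (iffP allP) => [P_all i | P_ord i]; first by apply: P_all; rewrite mem_iota ltn_ord.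
by rewrite mem_iota add0n => /andP[_ i_lt]; exact: P_ord (Ordinal i_lt).
Qed.

Definition bounded_minors3 (m n d : nat) (B : nat -> nat -> int) : bool :=
  [&& forall_lt m (fun i => forall_lt n (fun j => `|B i j| <= d%:Z)),
      forall_lt m (fun i1 => forall_lt m (fun i2 =>
        forall_lt n (fun j1 => forall_lt n (fun j2 =>
        `|minor2 B i1 i2 j1 j2| <= (d ^ 2)%:Z)))) &
      forall_lt m (fun i1 => forall_lt m (fun i2 => forall_lt m (fun i3 =>
        forall_lt n (fun j1 => forall_lt n (fun j2 => forall_lt n (fun j3 =>
        `|minor3 B i1 i2 i3 j1 j2 j3| <= (d ^ 3)%:Z))))))].

Lemma totally_1_submodular_of_bounded_minors (R : numFieldType) m n d
    (B : nat -> nat -> int) :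
  (m <= 3)%N -> (0 < d)%N -> bounded_minors3 m n d B ->
  totally_1_submodular (\matrix_(i < m, j < n) ((B i j)%:~R / d%:R) : 'M[R]_(m, n)).
Proof.
move=> m_le3 d_gt0 /and3P[B1 B2 B3] k f g f_inj g_inj.
have k_le_m : (k <= m)%N.
  by rewrite -[k]card_ord -[m in (_ <= m)%N]card_ord (leq_card _ f_inj).
rewrite (_ : \matrix_(a, b) _ = \matrix_(a, b) ((B (f a) (g b))%:~R / d%:R)); last first.
  by apply/matrixP => a b; rewrite !mxE.
rewrite det_intr_submx_div -natrX; apply: norm_intr_div_le1; first by rewrite expn_gt0 d_gt0.
case: k f g {f_inj g_inj} k_le_m => [|[|[|[|k]]]] f g k_le_m.
- by rewrite det_mx00 normr1.
- rewrite det_mx11 mxE expn1.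
  by move/forall_ltP: B1 => /(_ (f 0))/forall_ltP/(_ (g 0)).
- rewrite det_submx22.
  move/forall_ltP: B2 => /(_ (f 0))/forall_ltP/(_ (f 1)).
  by move=> /forall_ltP/(_ (g 0))/forall_ltP/(_ (g 1)).
- rewrite det_submx33.
  move/forall_ltP: B3 => /(_ (f 0))/forall_ltP/(_ (f 1))/forall_ltP/(_ (f 2)).
  by move=> /forall_ltP/(_ (g 0))/forall_ltP/(_ (g 1))/forall_ltP/(_ (g 2)).
- by have := leq_trans k_le_m m_le3.
Qed.

(* Encodes t = T / d: the minors of d (t + A) = T + d A are integers. *)
Definition shifted_certificate (m n d : nat) (T : nat -> nat) (A : nat -> nat -> int) : bool :=
  [&& forall_lt m (fun i => T i < d)%N, has (fun i => T i != 0)%N (iota 0 m),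
      forall_lt m (fun i => forall_lt n (fun j => A i j \in [:: -1; 0; 1])),
      uniq [seq [seq A i j | i <- iota 0 m] | j <- iota 0 n] &
      bounded_minors3 m n d (fun i j => (T i)%:Z + d%:Z * A i j)].

Lemma shifted_heller_feasible_of_certificate (R : realType) m n d T A :
  (m <= 3)%N -> shifted_certificate m n d T A -> shifted_heller_feasible R m n.
Proof.
move=> m_le3 /and5P[/forall_ltP T_lt /hasP[i0 i0_in Ti0] /forall_ltP A_vals A_uniq BA].
have i0_lt : (i0 < m)%N by move: i0_in; rewrite mem_iota.
have d_gt0 : (0 < d)%N := leq_ltn_trans (leq0n _) (T_lt (Ordinal i0_lt)).
have d_neq0 : d%:R != 0 :> R by rewrite pnatr_eq0 -lt0n.
pose t : 'cV[R]_m := \col_i ((T i)%:R / d%:R).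
exists t, (\matrix_(i, j) A i j); split.
- move=> i; rewrite mxE divr_ge0 ?ler0n //= ltr_pdivrMr ?ltr0n // mul1r ltr_nat.
  exact: T_lt.
- apply/eqP => /matrixP/(_ (Ordinal i0_lt) 0)/eqP.
  by rewrite !mxE mulf_eq0 invr_eq0 (negPf d_neq0) pnatr_eq0 (negPf Ti0).
- by move=> i j; rewrite mxE; move/forall_ltP: (A_vals i); apply.
- move=> j j' /matrixP col_eq; apply/val_inj/eqP.
  rewrite -(nth_uniq [::] _ _ A_uniq) ?size_map ?size_iota ?ltn_ord //.
  rewrite !(nth_map 0%N) ?size_iota ?ltn_ord // !nth_iota ?ltn_ord // !add0n.
  apply/eqP/eq_in_map => i; rewrite mem_iota => /andP[_ i_lt].
  by have := col_eq (Ordinal i_lt) 0; rewrite !mxE.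
- rewrite (_ : shift_mx _ _ = \matrix_(i, j) ((((T i)%:Z + d%:Z * A i j)%:~R) / d%:R)).
    exact: totally_1_submodular_of_bounded_minors m_le3 d_gt0 BA.
  apply/matrixP => i j; rewrite !mxE intrD intrM.
  by field.
Qed.

Definition cartesian (T : Type) (Ss : seq (seq T)) : seq (seq T) :=
  foldr (fun S U => [seq x :: v | x <- S, v <- U]) [:: [::]] Ss.

Lemma size_cartesian (T : Type) (Ss : seq (seq T)) :
  size (cartesian Ss) = (\prod_(S <- Ss) size S)%N.
Proof.
by elim: Ss => [|S Ss IH] /=; rewrite ?big_nil ?big_cons // size_allpairs IH.
Qed.

Lemma mem_cartesian (I : Type) (T : eqType) (rs : seq I) (F : I -> T) (S : I -> seq T) :
  (forall i, F i \in S i) -> [seq F i | i <- rs] \in cartesian [seq S i | i <- rs].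
Proof.
by move=> FS; elim: rs => [|i rs IH] /=; [rewrite inE | exact: allpairs_f].
Qed.

Lemma feasible_2_6 (R : realType) : shifted_heller_feasible R 2 6.
Proof.
apply: (@shifted_heller_feasible_of_certificate R 2 6 2 (nth 0%N [:: 1; 0]%N)
  (fun i j => (nth [::] (cartesian [:: [:: -1; 0]; [:: -1; 0; 1]]) j)`_i) isT).
by vm_compute.
Qed.

Lemma feasible_3_12 (R : realType) : shifted_heller_feasible R 3 12.
Proof.
apply: (@shifted_heller_feasible_of_certificate R 3 12 2 (nth 0%N [:: 1; 1; 0]%N)
  (fun i j => (nth [::] (cartesian [:: [:: -1; 0]; [:: -1; 0]; [:: -1; 0; 1]]) j)`_i) isT).
by vm_compute.
Qed.

Lemma count_mem_lt_size (T : eqType) (s B : seq T) :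
  uniq s -> ~ {subset B <= s} -> (count (mem B) s < size B)%N.
Proof.
move=> s_uniq B_not_sub; rewrite -size_filter ltnNge; apply/negP => B_le.
have filter_sub : {subset filter (mem B) s <= B}.
  by move=> x; rewrite mem_filter => /andP[].
have [_ filter_eq] := uniq_min_size (filter_uniq (mem B) s_uniq) filter_sub B_le.
by apply: B_not_sub => x; rewrite -filter_eq mem_filter => /andP[].
Qed.

Lemma size_le_blocks (T : eqType) (s : seq T) (P : seq (seq T)) :
  uniq s -> {subset s <= flatten P} -> (forall B, B \in P -> ~ {subset B <= s}) ->
  (size s <= sumn [seq (size B).-1 | B <- P])%N.
Proof.
move=> s_uniq s_sub P_not_sub.
have -> : size s = count (mem (flatten P)) s by apply/esym/eqP; rewrite -all_count; apply/allP.
elim: P {s_sub} P_not_sub => [|B P IH] P_not_sub /=.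
  by rewrite (@eq_count _ _ pred0) ?count_pred0.
rewrite (@eq_count _ _ (predU (mem B) (mem (flatten P)))); last by move=> x; rewrite /= mem_cat.
have := count_predUI (mem B) (mem (flatten P)) s.
have := count_mem_lt_size s_uniq (P_not_sub B (mem_head B P)).
have /IH : forall B', B' \in P -> ~ {subset B' <= s}.
  by move=> B' B'P; apply: P_not_sub; rewrite inE B'P orbT.
lia.
Qed.

Lemma enum_ord3 : enum 'I_3 = [:: 0; 1; 2].
Proof. by apply: (inj_map val_inj); rewrite val_enum_ord. Qed.

Definition forbidden_triples : seq (seq (seq int)) := [::
  [:: [:: 0; -1; -1]; [:: 0; -1; 1]; [:: 0; 0; 0]];
  [:: [:: 0; -1; 0]; [:: 0; 0; -1]; [:: -1; -1; -1]];
  [:: [:: 0; 0; 1]; [:: -1; -1; 0]; [:: -1; 1; 1]];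
  [:: [:: 0; 1; -1]; [:: -1; 0; -1]; [:: -1; 1; 0]];
  [:: [:: 0; 1; 0]; [:: -1; 0; 1]; [:: -1; 1; -1]];
  [:: [:: 0; 1; 1]; [:: -1; -1; 1]; [:: -1; 0; 0]]].

Definition shifted_triple_mx (R : numDomainType) (s : R) (B : seq (seq int)) : 'M[R]_3 :=
  \matrix_(k < 3, l < 3) ((val k == 0)%:R * s + ((nth [::] B l)`_k)%:~R).

Lemma forbidden_triple_not_totally_1_submodular (R : realFieldType) (s : R) B :
  0 < s < 1 -> B \in forbidden_triples -> ~ totally_1_submodular (shifted_triple_mx s B).
Proof.
(* For the first and last triple two columns have a 2 x 2 minor +-2 in the
   unshifted rows; for the others the determinant is +-(1 + s) or +-(2 - s). *)
move=> /andP[s_gt0 s_lt1] B_forb N1.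
have := N1 _ _ _ (@inj_id 'I_3) (@inj_id 'I_3).
have := N1 _ _ _ (@lift_inj _ 0) (@lift_inj _ ord_max).
rewrite (det_submx22 (shifted_triple_mx s B)) (det_submx33 (shifted_triple_mx s B)).
rewrite /minor3 /minor2 !mxE /= /bump !modn_small //=.
move: B_forb; rewrite !inE => /orP[|/orP[|/orP[|/orP[|/orP[]]]]] /eqP->.
all: rewrite -[(1 + 1)%N]/2%N /= => /ler_normlP[? ?] /ler_normlP[? ?].
all: lra.
Qed.

Lemma forbidden_triples_cover a b c :
  a \in [:: -1; 0] -> b \in [:: -1; 0; 1] -> c \in [:: -1; 0; 1] ->
  [:: a; b; c] \in flatten forbidden_triples.
Proof. by rewrite !inE => /orP[]/eqP-> /or3P[]/eqP-> /or3P[]/eqP->. Qed.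

Lemma forbidden_triples_shape : all (fun B => (size B == 3) && uniq B) forbidden_triples.
Proof. by []. Qed.

Section ColumnCount.
Variables (R : realType) (m n : nat) (t : 'cV[R]_m) (A : 'M[int]_(m, n)).
Hypotheses (t01 : forall i, 0 <= t i ord0 < 1)
  (A_vals : forall i j, A i j \in [:: -1; 0; 1])
  (A_inj : injective (fun j => col j A))
  (tA1 : totally_1_submodular (shift_mx t A)).

Definition pos_rows := [set i | 0 < t i ord0].

Lemma not_pos_row i : i \notin pos_rows -> t i ord0 = 0.
Proof.
rewrite inE -leNgt => t_le0; apply/eqP; rewrite eq_le t_le0.
by case/andP: (t01 i).
Qed.

Lemma pos_rows_gt0 : t != 0 -> (0 < #|pos_rows|)%N.
Proof.
move=> t_neq0; rewrite card_gt0; apply: contraNneq t_neq0 => pos0.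
apply/eqP/matrixP => i k; rewrite (ord1 k) mxE not_pos_row //.
by rewrite pos0 inE.
Qed.

Lemma pos_row_entry i j : i \in pos_rows -> A i j \in [:: -1; 0].
Proof.
rewrite inE => t_gt0; have := totally_1_submodular_entry tA1 i j; rewrite mxE.
by have := A_vals i j; rewrite !inE => /or3P[] /eqP-> // /ler_normlP[_]; lra.
Qed.

Definition allowed_entries i : seq int :=
  if i \in pos_rows then [:: -1; 0] else [:: -1; 0; 1].

Lemma entry_allowed i j : A i j \in allowed_entries i.
Proof. by rewrite /allowed_entries; case: ifP => [/pos_row_entry|]. Qed.

Definition column_code (rs : seq 'I_m) (j : 'I_n) : seq int := [seq A i j | i <- rs].

Lemma uniq_column_codes rs :
  (forall i, i \in rs) -> uniq [seq column_code rs j | j <- enum 'I_n].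
Proof.
move=> rs_full; rewrite map_inj_uniq ?enum_uniq // => j j' /eq_in_map code_eq.
by apply: A_inj; apply/matrixP => i k; rewrite !mxE; exact: code_eq.
Qed.

Lemma card_le_pos_rows : (n <= 2 ^ #|pos_rows| * 3 ^ (m - #|pos_rows|))%N.
Proof.
have all_rows i : i \in enum 'I_m by rewrite mem_enum.
have codes_sub : {subset [seq column_code (enum 'I_m) j | j <- enum 'I_n]
                 <= cartesian [seq allowed_entries i | i <- enum 'I_m]}.
  by move=> _ /mapP[j _ ->]; apply: mem_cartesian => i; exact: entry_allowed.
have := uniq_leq_size (uniq_column_codes all_rows) codes_sub.
rewrite size_map size_enum_ord size_cartesian big_map big_enum /= (bigID (mem pos_rows)) /=.
rewrite (eq_bigr (fun=> 2%N)) => [|i]; last by rewrite /allowed_entries => ->.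
rewrite [X in (_ * X)%N](eq_bigr (fun=> 3%N)) => [|i]; last first.
  by rewrite /allowed_entries => /negPf->.
rewrite [X in (_ * X)%N](eq_bigl (mem (~: pos_rows))) => [|i]; last by rewrite !inE.
by rewrite !prod_nat_const (cardsCs (~: pos_rows)) setCK card_ord.
Qed.

Lemma forbidden_triple_missing (sigma : 'I_3 -> 'I_m) (s : R) B :
  injective sigma -> 0 < s < 1 -> (forall k, t (sigma k) ord0 = (val k == 0%N)%:R * s) ->
  B \in forbidden_triples ->
  ~ {subset B <= [seq column_code (codom sigma) j | j <- enum 'I_n]}.
Proof.
move=> sigma_inj s01 t_sigma B_forb B_sub.
have /andP[/eqP B_size B_uniq] := allP forbidden_triples_shape B B_forb.
pose code := column_code (codom sigma).
have /fin_all_exists[js js_code] : forall l : 'I_3, exists j, code j = nth [::] B l.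
  move=> l; have /mapP[j _ ->] : nth [::] B l \in [seq code j | j <- enum 'I_n].
    by apply: B_sub; rewrite mem_nth ?B_size.
  by exists j.
have js_inj : injective js.
  move=> l l' /(congr1 code); rewrite !js_code => /eqP.
  by rewrite nth_uniq ?B_size // => /eqP /val_inj.
apply: (forbidden_triple_not_totally_1_submodular s01 B_forb).
rewrite (_ : shifted_triple_mx s B = \matrix_(k, l) shift_mx t A (sigma k) (js l)).
  exact (totally_1_submodular_submx tA1 sigma_inj js_inj).
apply/matrixP => k l; rewrite !mxE t_sigma -js_code /code /column_code codomE -map_comp.
by rewrite (nth_map ord0) ?size_enum_ord ?nth_ord_enum.
Qed.

Lemma card_le_one_pos_row (sigma : 'I_3 -> 'I_m) :
  injective sigma -> (forall i, i \in codom sigma) -> pos_rows = [set sigma 0] ->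
  (n <= 12)%N.
Proof.
move=> sigma_inj sigma_onto pos1.
pose s := t (sigma 0) ord0.
have pos_sigma k : (sigma k \in pos_rows) = (val k == 0%N).
  by rewrite pos1 inE (inj_eq sigma_inj).
have s01 : 0 < s < 1.
  have : sigma 0 \in pos_rows by rewrite pos_sigma.
  by rewrite inE /s => ->; case/andP: (t01 (sigma 0)).
have t_sigma k : t (sigma k) ord0 = (val k == 0%N)%:R * s.
  have [-> | k_neq0] := eqVneq k 0; first by rewrite mul1r.
  have k_val : (val k == 0%N) = false := negPf k_neq0.
  by rewrite k_val mul0r not_pos_row // pos_sigma k_val.
have codes_cover : {subset [seq column_code (codom sigma) j | j <- enum 'I_n]
                    <= flatten forbidden_triples}.
  move=> _ /mapP[j _ ->]; rewrite /column_code codomE enum_ord3 /=.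
  by apply: forbidden_triples_cover; rewrite ?pos_row_entry ?pos_sigma.
have := size_le_blocks (uniq_column_codes sigma_onto) codes_cover
  (fun B => forbidden_triple_missing sigma_inj s01 t_sigma (B := B)).
by rewrite size_map size_enum_ord.
Qed.

End ColumnCount.

Lemma feasible_2_le6 (R : realType) n : shifted_heller_feasible R 2 n -> (n <= 6)%N.
Proof.
case=> t [A [t01 t_neq0 A_vals A_inj tA1]].
have := card_le_pos_rows A_vals A_inj tA1.
have := pos_rows_gt0 t01 t_neq0; have := max_card (pos_rows t); rewrite card_ord.
move=> p_le2 p_gt0 /leq_trans; apply.
by case: #|_| p_le2 p_gt0 => [|[|[|]]].
Qed.

Lemma feasible_3_le12 (R : realType) n : shifted_heller_feasible R 3 n -> (n <= 12)%N.
Proof.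
case=> t [A [t01 t_neq0 A_vals A_inj tA1]].
case: (boolP (#|pos_rows t| == 1)) => [/cards1P[i0 pos1] | pos_neq1].
  apply: (card_le_one_pos_row t01 A_vals A_inj tA1 (sigma := tperm 0 i0)).
  - exact: perm_inj.
  - by move=> i; rewrite -[i](permKV (tperm 0 i0)) codom_f.
  - by rewrite tpermL.
have := card_le_pos_rows A_vals A_inj tA1.
have := pos_rows_gt0 t01 t_neq0; have := max_card (pos_rows t); rewrite card_ord.
move=> p_le3 p_gt0 /leq_trans; apply.
by case: #|_| pos_neq1 p_le3 p_gt0 => [|[|[|[|]]]].
Qed.

Theorem proposition2p5 (R : realType) :
  shifted_heller_constant_is R 2 6 /\ shifted_heller_constant_is R 3 12.
Proof.
split; split.
- exact: feasible_2_6.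
- exact: feasible_2_le6.
- exact: feasible_3_12.
- exact: feasible_3_le12.
Qed.
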